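(* Let $k\ge 2$ be an integer. For any $k-1$ distinct positive integers $a_1<a_2<\cdots<a_{k-1}$, there exists an index $i$ with $2\left\lfloor\frac{k-1}{3}\right\rfloor\leq a_i\leq a_{k-1}-\left\lfloor\frac{k-1}{3}\right\rfloor$. *)

From mathcomp Require Import all_boot.

From mathcomp Require Import all_boot.
From mathcomp Require Import zify.

(* A strictly increasing sequence of positive integers grows at least as fast
   as its index: a_i >= i and a_j >= a_i + (j - i). Hence i := n - floor(n/3)
   works: a_i >= n - floor(n/3) >= 2 floor(n/3) and a_n - a_i >= floor(n/3). *)

Section IncreasingSequence.

Context {a : nat -> nat} {n : nat}.
Hypothesis a_incr : forall i j, 1 <= i -> i < j -> j <= n -> a i < a j.

Lemma incr_addn i d : 1 <= i -> i + d <= n -> a i + d <= a (i + d).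
Proof.
move=> i_ge1; elim: d => [|d IHd] le_idn; first by rewrite !addn0.
rewrite addnS in le_idn *.
have := a_incr (i + d) (i + d).+1 (leq_trans i_ge1 (leq_addr _ _)) (ltnSn _) le_idn.
have := IHd (ltnW le_idn).
lia.
Qed.

Lemma incr_subn {i j} : 1 <= i <= j -> j <= n -> a i + (j - i) <= a j.
Proof. by move=> /andP[i_ge1 le_ij] le_jn; rewrite -{2}(subnKC le_ij) incr_addn ?subnKC. Qed.

Lemma incr_index_le {i} : 0 < a 1 -> 1 <= i <= n -> i <= a i.
Proof.
move=> a1_pos /andP[i_ge1 le_in].
have := @incr_subn 1 i ltac:(by rewrite leqnn i_ge1) le_in.
lia.
Qed.

End IncreasingSequence.

Theorem lemma2 (k : nat) (a : nat -> nat) :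
  2 <= k ->
  (forall i, 1 <= i <= k - 1 -> 0 < a i) ->
  (forall i j, 1 <= i -> i < j -> j <= k - 1 -> a i < a j) ->
  exists i, [/\ 1 <= i <= k - 1,
               2 * ((k - 1) %/ 3) <= a i
             & a i <= a (k - 1) - (k - 1) %/ 3].
Proof.
move=> k_ge2 a_pos a_incr; set n := k - 1; set m := n %/ 3.
have le_3m_n : 3 * m <= n by rewrite mulnC leq_divM.
have n_ge1 : 1 <= n by rewrite /n; lia.
have i_range : 1 <= n - m <= n by apply/andP; split; lia.
have a1_pos : 0 < a 1 by apply: a_pos; rewrite leqnn n_ge1.
have := incr_index_le a_incr a1_pos i_range.
have := incr_subn a_incr i_range (leqnn n).
exists (n - m); split; [done | lia | lia].
Qed.
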